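(* For every integer $n\ge 3$, the polytope $\operatorname{conv}\phi_n$ is not 3-neighborly; that is, there exist three vertices of $\operatorname{conv}\phi_n$ whose convex hull is not a face of $\operatorname{conv}\phi_n$. (For $n=3$, the sum of the three elements of $\phi_3$ corresponding to the three cyclic permutations (including the identity) equals the sum of the three elements corresponding to the three transpositions.)
   Context: For $n\ge 3$, $\phi_n$ is the set of $\binom{n}{2}\times\binom{n}{2}$ permutation matrices of the edges of the complete graph $K_n$ induced by permutations of its vertices: for a permutation $\sigma$ of $[n]$, the associated vector $\bm{z}\in\{0,1\}^{\binom{n}{2}\times\binom{n}{2}}$ has coordinates $z_{ijkl}$, $i,j,k,l\in[n]$, $i<j$, $k<l$, with $z_{ijkl}=1$ iff $\{\sigma(i),\sigma(j)\}=\{k,l\}$, and $0$ otherwise. All elements of $\phi_n$ are vertices of $\operatorname{conv}\phi_n$. A polytope is $k$-neighborly if every set of at most $k$ of its vertices is the vertex set of a face. *)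

From HB Require Import structures.
From mathcomp Require Import all_boot all_order all_fingroup all_algebra.
Unset Printing Implicit Defensive.
Import Order.TTheory GRing.Theory Num.Theory.
Local Open Scope ring_scope.

(* Edges {i,j} of K_n, encoded as pairs (i,j) with i < j. *)
Definition edge (n : nat) := {p : 'I_n * 'I_n | (p.1 < p.2)%N}.

(* Coordinates z_{ijkl}: pairs (edge ij, edge kl). *)
Definition coord (n : nat) := (edge n * edge n)%type.

Notation space R n := {ffun coord n -> R}.

(* The element of phi_n associated to a vertex permutation sigma:
   z_{ijkl} = 1 iff {sigma i, sigma j} = {k, l}. *)
Definition zvec (R : realFieldType) (n : nat) (s : {perm 'I_n}) : space R n :=
  [ffun t : coord n =>
     let e := val t.1 in let f := val t.2 in
     if [set s e.1; s e.2] == [set f.1; f.2] then 1 else 0].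

Definition dotp (R : realFieldType) (n : nat) (c x : space R n) : R :=
  \sum_(t : coord n) c t * x t.

Definition conv (R : realFieldType) (n : nat) (I : finType) (f : I -> space R n)
  (x : space R n) : Prop :=
  exists lam : I -> R,
    [/\ forall i, 0 <= lam i, \sum_i lam i = 1 & forall t, x t = \sum_i lam i * f i t].

Definition convphi (R : realFieldType) (n : nat) : space R n -> Prop :=
  conv R n {perm 'I_n} (fun s : {perm 'I_n} => zvec R n s).

(* F is a face of P: F = P ∩ H for a hyperplane H = {c.x = d} with P ⊆ {c.x <= d}
   (c = 0 allowed, giving the empty face and P itself). *)
Definition is_face (R : realFieldType) (n : nat) (P F : space R n -> Prop) : Prop :=
  exists (c : space R n) (d : R),
    (forall x, P x -> dotp R n c x <= d) /\
    (forall x, F x <-> (P x /\ dotp R n c x = d)).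

(* Fix three vertices a, b, c of K_n.  The edge-permutation vectors of the three
   permutations of {a, b, c} that are even (1, (a b c), (a c b)) have the same sum
   as those of the three transpositions of {a, b, c}: each edge is sent onto each
   edge equally often by both triples.  Hence a supporting hyperplane of conv phi_n
   containing the first three vertices contains all six of them, in particular
   z((a b)).  But the coordinates z_{ab,ab} + z_{ac,bc} add up to 1, 0, 1 on the
   three even permutations and to 2 on (a b), so z((a b)) lies outside their hull. *)

From Pilot Require Import Defs.
From HB Require Import structures.
From mathcomp Require Import all_boot all_order all_fingroup all_algebra.
From mathcomp Require Import ring lra.
Import Order.TTheory GRing.Theory Num.Theory.
Import Defs.
Local Open Scope ring_scope.

Section ConvexGeometry.

Context {R : realFieldType} {n : nat}.

Lemma conv_point {I : finType} (f : I -> space R n) (i : I) : conv R n I f (f i).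
Proof.
exists (fun k => (k == i)%:R); split => [k|| t]; first exact: ler0n.
  by rewrite (bigD1 i) //= eqxx big1 ?addr0 // => k /negbTE ->.
by rewrite (bigD1 i) //= eqxx mul1r big1 ?addr0 // => k /negbTE ->; rewrite mul0r.
Qed.

Lemma dotp_sumr (I : finType) (c : space R n) (x : I -> space R n) :
  dotp R n c (\sum_i x i) = \sum_i dotp R n c (x i).
Proof.
rewrite /dotp; under eq_bigr do rewrite sum_ffunE mulr_sumr.
exact: exchange_big.
Qed.

Lemma conv_dotp_le {I : finType} {f : I -> space R n} {c x : space R n} {d : R} :
  conv R n I f x -> (forall i, dotp R n c (f i) <= d) -> dotp R n c x <= d.
Proof.
move=> [lam [lam_ge0 lam_sum x_def]] f_le.
have -> : dotp R n c x = \sum_i lam i * dotp R n c (f i).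
  rewrite /dotp; under eq_bigr do rewrite x_def mulr_sumr.
  rewrite exchange_big; apply: eq_bigr => i _; rewrite mulr_sumr.
  by apply: eq_bigr => t _; rewrite mulrCA.
rewrite -[d]mul1r -lam_sum mulr_suml; apply: ler_sum => i _.
exact: ler_wpM2l.
Qed.

Lemma dotpDl (c1 c2 x : space R n) :
  dotp R n (c1 + c2) x = dotp R n c1 x + dotp R n c2 x.
Proof. by rewrite /dotp -big_split; apply: eq_bigr => t _; rewrite ffunE mulrDl. Qed.

Lemma dotp_delta (k : coord n) (x : space R n) :
  dotp R n [ffun t => (t == k)%:R] x = x k.
Proof.
rewrite /dotp (bigD1 k) //= ffunE eqxx mul1r big1 ?addr0 // => t /negbTE tk.
by rewrite ffunE tk mul0r.
Qed.

Lemma face_sum_closed {P F : space R n -> Prop} {I : finType} {x y : I -> space R n} :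
  is_face R n P F -> (forall i, F (x i)) -> (forall i, P (y i)) ->
  \sum_i x i = \sum_i y i -> forall i, F (y i).
Proof.
move=> [c [d [P_le F_eq]]] Fx Py sum_xy i; apply/F_eq; split => //.
have dx j : dotp R n c (x j) = d by have /F_eq[] := Fx j.
have gap_ge0 j : 0 <= d - dotp R n c (y j) by rewrite subr_ge0 P_le.
have gap_sum : \sum_j (d - dotp R n c (y j)) = 0.
  by rewrite sumrB -dotp_sumr -sum_xy dotp_sumr (eq_bigr _ (fun j _ => dx j)) subrr.
by apply/eqP; rewrite eq_sym -subr_eq0; apply/eqP; apply: psumr_eq0P gap_sum _ _.
Qed.

End ConvexGeometry.

(* Since [(s * t) x = t (s x)], this is the cycle x -> y -> z -> x. *)
Definition cycle3 {T : finType} (x y z : T) : {perm T} := tperm y z * tperm x y.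

Lemma eq_set2 (T : finType) (x y u v : T) :
  ([set x; y] == [set u; v]) = ((x == u) && (y == v)) || ((x == v) && (y == u)).
Proof.
apply/eqP/idP => [E|/orP[]/andP[/eqP-> /eqP->] //]; last exact: setUC.
have: x \in [set u; v] by rewrite -E set21.
have: y \in [set u; v] by rewrite -E set22.
have: u \in [set x; y] by rewrite E set21.
have: v \in [set x; y] by rewrite E set22.
by rewrite !inE; do 4!case/orP=> /eqP ?; subst; rewrite ?eqxx ?orbT.
Qed.

Section ThreeCycles.

Variables (T : finType) (x y z : T).
Hypotheses (yx : y != x) (zx : z != x) (xz : x != z) (yz : y != z).

Lemma cycle3_1 : cycle3 x y z x = y.
Proof. by rewrite permM (tpermD yx zx) tpermL. Qed.

Lemma cycle3_2 : cycle3 x y z y = z.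
Proof. by rewrite permM tpermL tpermD. Qed.

Lemma cycle3_3 : cycle3 x y z z = x.
Proof. by rewrite permM tpermR tpermR. Qed.

Lemma cycle3D w : x != w -> y != w -> z != w -> cycle3 x y z w = w.
Proof. by move=> xw yw zw; rewrite permM !tpermD. Qed.

End ThreeCycles.

Section PairImages.

Variables (T : finType) (a b c : T).
Hypotheses (ab : a != b) (bc : b != c) (ac : a != c).

Lemma three_pointsP (x : T) :
  [\/ x = a, x = b, x = c | [/\ a != x, b != x & c != x]].
Proof.
case: (eqVneq x a) => [|xa]; first by constructor 1.
case: (eqVneq x b) => [|xb]; first by constructor 2.
case: (eqVneq x c) => [|xc]; first by constructor 3.
by constructor 4.
Qed.

Lemma pair_image_cycles_transpositions (i j : T) (F : {set T}) :
  (([set i; j] == F) + ([set cycle3 a b c i; cycle3 a b c j] == F)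
     + ([set cycle3 a c b i; cycle3 a c b j] == F)
   = ([set tperm a b i; tperm a b j] == F) + ([set tperm b c i; tperm b c j] == F)
     + ([set tperm a c i; tperm a c j] == F))%N.
Proof.
have [ba cb ca] : [/\ b != a, c != b & c != a] by split; rewrite eq_sym.
have setC2 (u v : T) : [set v; u] = [set u; v] by rewrite setUC.
case: (three_pointsP i) => [->|->|->|[ai bi ci]];
  case: (three_pointsP j) => [->|->|->|[aj bj cj]];
  rewrite ?cycle3_1 ?cycle3_2 ?cycle3_3 ?cycle3D ?tpermL ?tpermR ?tpermD //.
all: rewrite ?(setC2 a b) ?(setC2 a c) ?(setC2 b c); ring.
Qed.

End PairImages.

Section EdgePermutationVectors.

Context {R : realFieldType} {n : nat}.

Lemma zvecE (s : {perm 'I_n}) (t : coord n) :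
  zvec R n s t = ([set s (val t.1).1; s (val t.1).2] == [set (val t.2).1; (val t.2).2])%:R.
Proof. by rewrite ffunE /=; case: (_ == _). Qed.

Lemma zvec_cycles_transpositions (a b c : 'I_n) :
  a != b -> b != c -> a != c ->
  zvec R n 1 + zvec R n (cycle3 a b c) + zvec R n (cycle3 a c b)
  = zvec R n (tperm a b) + zvec R n (tperm b c) + zvec R n (tperm a c).
Proof.
move=> ab bc ac; apply/ffunP => t; rewrite !ffunE /= !perm1.
have indicatorE (B : bool) : (if B then 1 else 0) = B%:R :> R by case: B.
by rewrite !indicatorE -!natrD pair_image_cycles_transpositions.
Qed.

End EdgePermutationVectors.

Section IncreasingTriple.

Context (R : realFieldType) {n : nat} {a b c : 'I_n}.
Hypotheses (ab : (a < b)%N) (bc : (b < c)%N).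

Let ac : (a < c)%N := ltn_trans ab bc.
Let eq_ab : (a == b) = false := ltn_eqF ab.
Let eq_bc : (b == c) = false := ltn_eqF bc.
Let eq_ac : (a == c) = false := ltn_eqF ac.
Let eq_ba : (b == a) = false := gtn_eqF ab.
Let eq_cb : (c == b) = false := gtn_eqF bc.
Let eq_ca : (c == a) = false := gtn_eqF ac.
Let neq_ab : a != b := negbT eq_ab.
Let neq_bc : b != c := negbT eq_bc.
Let neq_ac : a != c := negbT eq_ac.
Let neq_ba : b != a := negbT eq_ba.
Let neq_cb : c != b := negbT eq_cb.
Let neq_ca : c != a := negbT eq_ca.

Let k1 : coord n := (exist _ (a, b) ab, exist _ (a, b) ab).
Let k2 : coord n := (exist _ (a, c) ac, exist _ (b, c) bc).

Let zvec_k1 : [/\ zvec R n 1 k1 = 1, zvec R n (cycle3 a b c) k1 = 0,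
                  zvec R n (cycle3 a c b) k1 = 0 & zvec R n (tperm a b) k1 = 1].
Proof.
rewrite !zvecE /= !perm1 ?cycle3_1 ?cycle3_2 ?cycle3_3 ?tpermL ?tpermR //.
by rewrite !eq_set2 !eqxx ?eq_ab ?eq_bc ?eq_ac ?eq_ba ?eq_cb ?eq_ca.
Qed.

Let zvec_k2 : [/\ zvec R n 1 k2 = 0, zvec R n (cycle3 a b c) k2 = 0,
                  zvec R n (cycle3 a c b) k2 = 1 & zvec R n (tperm a b) k2 = 1].
Proof.
rewrite !zvecE /= !perm1 ?cycle3_1 ?cycle3_2 ?cycle3_3 ?tpermL ?tpermR ?tpermD //.
by rewrite !eq_set2 !eqxx ?eq_ab ?eq_bc ?eq_ac ?eq_ba ?eq_cb ?eq_ca.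
Qed.

Lemma zvec_cycles_neq :
  [/\ zvec R n 1 != zvec R n (cycle3 a b c), zvec R n 1 != zvec R n (cycle3 a c b)
    & zvec R n (cycle3 a b c) != zvec R n (cycle3 a c b)].
Proof.
have [z1 zr zr' _] := zvec_k1; have [_ wr wr' _] := zvec_k2.
split; apply/eqP => /ffunP.
- by move/(_ k1)/eqP; rewrite z1 zr oner_eq0.
- by move/(_ k1)/eqP; rewrite z1 zr' oner_eq0.
- by move/(_ k2)/eqP; rewrite wr wr' eq_sym oner_eq0.
Qed.

Lemma cycles_conv_not_face :
  ~ is_face R n (convphi R n)
      (conv R n 'I_3 (fun i : 'I_3 => zvec R n (if val i == 0%N then 1%g
                        else if val i == 1%N then cycle3 a b c else cycle3 a c b))).
Proof.
set cyc := fun i : 'I_3 => _ => face.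
pose tr (i : 'I_3) := zvec R n (if val i == 0%N then tperm a b
                        else if val i == 1%N then tperm b c else tperm a c).
have sum_eq : \sum_i cyc i = \sum_i tr i.
  by rewrite !big_ord_recr !big_ord0 /= !add0r zvec_cycles_transpositions.
have F_tab := face_sum_closed face (conv_point _) (fun i => conv_point _ _) sum_eq ord0.
pose probe := [ffun t => (t == k1)%:R] + [ffun t => (t == k2)%:R] : space R n.
have [z1 zr zr' zt] := zvec_k1; have [w1 wr wr' wt] := zvec_k2.
have /(conv_dotp_le F_tab) : forall i, dotp R n probe (cyc i) <= 1.
  case=> -[|[|[|//]]] i_lt3;
  by rewrite /cyc /= dotpDl !dotp_delta ?z1 ?w1 ?zr ?wr ?zr' ?wr'; lra.
by rewrite /= dotpDl !dotp_delta zt wt; lra.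
Qed.

End IncreasingTriple.

Theorem mainTheorem4 (R : realFieldType) (n : nat) (hn : (3 <= n)%N) :
  exists s1 s2 s3 : {perm 'I_n},
    [/\ zvec R n s1 != zvec R n s2, zvec R n s1 != zvec R n s3,
        zvec R n s2 != zvec R n s3 &
        ~ is_face R n (convphi R n)
            (conv R n 'I_3 (fun i : 'I_3 => zvec R n (if val i == 0%N then s1
                                             else if val i == 1%N then s2 else s3)))].
Proof.
case: n hn => [|[|[|m]]] // _.
pose a : 'I_m.+3 := inord 0; pose b : 'I_m.+3 := inord 1; pose c : 'I_m.+3 := inord 2.
have ab : (a < b)%N by rewrite !inordK.
have bc : (b < c)%N by rewrite !inordK.
exists 1%g, (cycle3 a b c), (cycle3 a c b).
have [neq1 neq2 neq3] := zvec_cycles_neq R ab bc.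
by split=> //; apply: cycles_conv_not_face.
Qed.
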